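(* Let $f:D^n\to\mathbb R$. The Lovász extension $f^L:[-\alpha,1]^n\to\mathbb R$ of $f$ is convex if and only if $f$ is $\alpha$-bisubmodular.
   Context: Fix $\alpha\in(0,1]$ and $D=\{-\alpha,0,1\}\subset\mathbb R$. Define the partial order $\preceq$ on $D$ by $0\preceq 1$, $0\preceq -\alpha$ (plus reflexivity), with $1$ and $-\alpha$ incomparable; extend it componentwise to $D^n$. Define $\wedge_0$ on $D$ by $1\wedge_0(-\alpha)=(-\alpha)\wedge_0 1=0$ and $x\wedge_0 y=\min(x,y)$ w.r.t. $\preceq$ if $\{x,y\}\ne\{-\alpha,1\}$; for $a\in D$ define $\vee_a$ by $1\vee_a(-\alpha)=(-\alpha)\vee_a 1=a$ and $x\vee_a y=\max(x,y)$ w.r.t. $\preceq$ if $\{x,y\}\ne\{-\alpha,1\}$; extend componentwise to $D^n$. $f:D^n\to\mathbb R$ is $\alpha$-bisubmodular if for all $\mathbf a,\mathbf b\in D^n$: $f(\mathbf a\wedge_0\mathbf b)+\alpha f(\mathbf a\vee_0\mathbf b)+(1-\alpha)f(\mathbf a\vee_1\mathbf b)\le f(\mathbf a)+f(\mathbf b)$. For $\mathbf x\in[-\alpha,1]^n$, $\mathcal P(\mathbf x)$ is the set of $\lambda:D^n\to[0,1]$ with $\sum_{\mathbf a}\lambda(\mathbf a)=1$ and $\sum_{\mathbf a}\lambda(\mathbf a)\mathbf a=\mathbf x$. For each $\mathbf x$ there is a unique $\lambda_{\mathbf x}\in\mathcal P(\mathbf x)$ whose support is a chain w.r.t. $\preceq$;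 the Lovász extension is $f^L(\mathbf x)=\sum_{\mathbf a\in D^n}\lambda_{\mathbf x}(\mathbf a)f(\mathbf a)$. *)

From HB Require Import structures.
From mathcomp Require Import all_boot all_order all_algebra.
From Stdlib Require Import ClassicalEpsilon.
Set Implicit Arguments. Unset Strict Implicit. Unset Printing Implicit Defensive.
Import Order.TTheory GRing.Theory Num.Theory.
Local Open Scope ring_scope.

(* The three-element set D = {-alpha, 0, 1}, encoded as option bool:
   None = 0, Some true = 1, Some false = -alpha. *)
Definition D := option bool.
Definition D0 : D := None.
Definition D1 : D := Some true.
Definition Dm : D := Some false.

Definition dval (R : realFieldType) (alpha : R) (d : D) : R :=
  match d with None => 0 | Some true => 1 | Some false => - alpha end.

Definition dle (d e : D) : bool := (d == D0) || (d == e).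

Definition dmeet (d e : D) : D := if d == e then d else D0.
Definition djoin (a : D) (d e : D) : D :=
  if d == D0 then e else if e == D0 then d else if d == e then d else a.

Definition vec (n : nat) := {ffun 'I_n -> D}.

Definition vle n (a b : vec n) : bool := [forall i, dle (a i) (b i)].
Definition vmeet n (a b : vec n) : vec n := [ffun i => dmeet (a i) (b i)].
Definition vjoin n (c : D) (a b : vec n) : vec n := [ffun i => djoin c (a i) (b i)].

Definition bisubmodular (R : realFieldType) (alpha : R) n (f : vec n -> R) : Prop :=
  forall a b : vec n,
    f (vmeet a b) + alpha * f (vjoin D0 a b) + (1 - alpha) * f (vjoin D1 a b)
    <= f a + f b.

Definition inP (R : realFieldType) (alpha : R) n (x : 'I_n -> R)
  (lam : {ffun vec n -> R}) : Prop :=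
  (forall a, 0 <= lam a <= 1) /\
  \sum_(a : vec n) lam a = 1 /\
  (forall i : 'I_n, \sum_(a : vec n) lam a * dval alpha (a i) = x i).

Definition chain_support (R : realFieldType) n (lam : {ffun vec n -> R}) : Prop :=
  forall a b : vec n, lam a != 0 -> lam b != 0 -> vle a b || vle b a.

(* lambda_x : the (unique, for x in the box) chain-supported element of P(x) *)
Definition lambda_x (R : realFieldType) (alpha : R) n (x : 'I_n -> R)
  : {ffun vec n -> R} :=
  epsilon (inhabits [ffun=> 0])
    (fun lam => inP alpha x lam /\ chain_support lam).

Definition lovasz (R : realFieldType) (alpha : R) n (f : vec n -> R)
  (x : 'I_n -> R) : R :=
  \sum_(a : vec n) lambda_x alpha x a * f a.

Definition in_box (R : realFieldType) (alpha : R) n (x : 'I_n -> R) : Prop :=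
  forall i, - alpha <= x i <= 1.

Definition convex_on_box (R : realFieldType) (alpha : R) n (g : ('I_n -> R) -> R)
  : Prop :=
  forall (x y : 'I_n -> R) (t : R), in_box alpha x -> in_box alpha y ->
    0 <= t <= 1 ->
    g (fun i => t * x i + (1 - t) * y i) <= t * g x + (1 - t) * g y.

(* f^L(x) averages f against the chain-supported representation lambda_x of x,
   which the definition picks by choice; the file first makes it explicit.
   - Uniqueness: for a chain-supported representation, the mass of the up-set
     of a vertex a is the least coordinate mass lambda{b | b_i = a_i} over the
     support of a, and coordinate masses are determined by x.  Moebius
     inversion along the number of zero coordinates shows lambda_x is unique.
   - Existence: switching coordinates on in decreasing order of |x_i|
     (measured in units of alpha on the negative side) gives an explicit chain
     with explicit weights.
   - Greedy minorant: along that chain f agrees with an affine function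
     f(0) + <y, .>; when f is bisubmodular this affine function lies below f
     on all of D^n, hence below f^L on the whole box.
   So f^L is a supremum of affine functions each touching it at one point, and
   is convex.  Conversely, the midpoint of two vertices a, b is represented on
   the chain a /\_0 b <= a \/_0 b <= a \/_1 b, and convexity there is exactly
   the bisubmodular inequality. *)

From mathcomp Require Import all_boot all_order all_algebra.
From mathcomp Require Import ring lra.
From Stdlib Require Import ClassicalEpsilon.
Set Implicit Arguments. Unset Strict Implicit. Unset Printing Implicit Defensive.
Import Order.TTheory GRing.Theory Num.Theory.
Local Open Scope ring_scope.

Lemma dle_refl d : dle d d.
Proof. by case: d => [[]|]. Qed.

Lemma dle0 d : dle d D0 -> d = D0.
Proof. by case: d => [[]|]. Qed.

Lemma dle_nonzero d e : dle d e -> d != D0 -> e = d.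
Proof. by case: d => [[]|]; case: e => [[]|]. Qed.

Lemma dle_meet_join d e : dle d e -> dmeet d e = d /\ forall c, djoin c d e = e.
Proof. by case: d => [[]|]; case: e => [[]|]. Qed.

Lemma dmeet0 d : dmeet d D0 = D0.
Proof. by case: d => [[]|]. Qed.

Lemma djoin0 c d : djoin c d D0 = d.
Proof. by case: d => [[]|]. Qed.

Lemma dmeet_join_chain d e :
  [/\ dle (dmeet d e) (djoin D0 d e), dle (dmeet d e) (djoin D1 d e)
    & dle (djoin D0 d e) (djoin D1 d e)].
Proof. by case: d => [[]|]; case: e => [[]|]. Qed.

Lemma dmeet_join_nonzero d e : e != D0 ->
  [/\ dle (dmeet d e) e, dle (djoin D0 d e) e
    & djoin D1 (djoin D1 d e) e = djoin D1 d e].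
Proof. by case: d => [[]|]; case: e => [[]|]. Qed.

Section Embedding.
Variables (R : realFieldType) (alpha : R).

Lemma dval_modular d e :
  dval alpha (dmeet d e) + alpha * dval alpha (djoin D0 d e)
  + (1 - alpha) * dval alpha (djoin D1 d e) = dval alpha d + dval alpha e.
Proof. by case: d => [[]|]; case: e => [[]|]; rewrite /dmeet /djoin /=; ring. Qed.

Lemma dval_split d : dval alpha d = (d == D1)%:R - alpha * (d == Dm)%:R.
Proof. by case: d => [[]|] /=; ring. Qed.

Lemma dval_bounds d : 0 < alpha -> alpha <= 1 -> - alpha <= dval alpha d <= 1.
Proof. by move=> ha ha1; case: d => [[]|] /=; apply/andP; split; lra. Qed.

Lemma dval_neq0 d : 0 < alpha -> d != D0 -> dval alpha d != 0.
Proof. by move=> ha; case: d => [[]|] //= _; rewrite ?oner_neq0 // oppr_eq0 gt_eqF. Qed.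

End Embedding.

Section Cube.
Variable n : nat.
Implicit Types a b c t : vec n.

Definition vzero : vec n := [ffun=> D0].

Definition vclear a (i0 : 'I_n) : vec n := [ffun i => if i == i0 then D0 else a i].

Lemma vle_refl a : vle a a.
Proof. by apply/forallP => i; exact: dle_refl. Qed.

Lemma vle_coord a b i : vle a b -> a i != D0 -> b i = a i.
Proof. by move=> /forallP /(_ i); exact: dle_nonzero. Qed.

Lemma vle0 a : vle a vzero -> a = vzero.
Proof.
move=> /forallP le_a0; apply/ffunP => i; rewrite ffunE; apply: dle0.
by have := le_a0 i; rewrite ffunE.
Qed.

Lemma vmeet_join_chain a b :
  [/\ vle (vmeet a b) (vjoin D0 a b), vle (vmeet a b) (vjoin D1 a b)
    & vle (vjoin D0 a b) (vjoin D1 a b)].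
Proof.
by split; apply/forallP => i; rewrite !ffunE; case: (dmeet_join_chain (a i) (b i)).
Qed.

Lemma vmeet_join_full a t : (forall i, t i != D0) ->
  [/\ vle (vmeet a t) t, vle (vjoin D0 a t) t
    & vjoin D1 (vjoin D1 a t) t = vjoin D1 a t].
Proof.
move=> tfull; split; first 1 [apply/forallP => i | apply/forallP => i | apply/ffunP => i];
  by rewrite !ffunE; case: (dmeet_join_nonzero (a i) (tfull i)).
Qed.

Lemma vle_clear0 a c i0 : vle a c -> a i0 = D0 -> vle a (vclear c i0).
Proof.
move=> /forallP ac ai0; apply/forallP => i; rewrite ffunE.
by case: eqP => [->|_]; rewrite ?ai0 ?dle_refl.
Qed.

(* This is how bisubmodularity climbs a chain one coordinate at a time. *)
Lemma vle_clear_step a c i0 : vle a c -> a i0 != D0 ->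
  [/\ vle (vclear a i0) (vclear c i0), vmeet a (vclear c i0) = vclear a i0
    & forall z, vjoin z a (vclear c i0) = c].
Proof.
move=> ac ai0; have /forallP dac := ac.
split; first by apply/forallP => i; rewrite !ffunE; case: eqP => _; rewrite ?dle_refl.
- apply/ffunP => i; rewrite !ffunE; case: eqP => [_|_]; first exact: dmeet0.
  by case: (dle_meet_join (dac i)).
- move=> z; apply/ffunP => i; rewrite !ffunE; case: eqP => [->|_].
    by rewrite djoin0 (vle_coord ac ai0).
  by case: (dle_meet_join (dac i)).
Qed.

Lemma zeros_lt a b : vle a b -> b != a ->
  (#|[pred i | b i == D0]| < #|[pred i | a i == D0]|)%N.
Proof.
move=> /forallP ab ne_ba; apply/proper_card/properP; split.
  by apply/subsetP => i; rewrite !inE => /eqP bi; have := ab i; rewrite bi => /dle0 ->.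
have [i bi] : exists i, b i != a i.
  by apply/existsP; apply: contraNT ne_ba; rewrite negb_exists => /forallP H;
    apply/eqP/ffunP => i; apply/eqP; have := H i; rewrite negbK.
exists i; rewrite !inE.
- by case/orP: (ab i) => [//|/eqP aib]; rewrite aib eqxx in bi.
- by apply: contra bi => /eqP bi0; rewrite bi0; have := ab i; rewrite bi0 => /dle0 ->.
Qed.

End Cube.

Lemma sum_neq0_witness (R : realFieldType) (I : finType) (F : I -> R) :
  \sum_i F i != 0 -> exists i, F i != 0.
Proof.
move=> H; apply/existsP; apply: contraNT H; rewrite negb_exists => /forallP H.
by apply/eqP; apply: big1 => i _; apply/eqP; move: (H i); rewrite negbK.
Qed.

Section Uniqueness.
Variables (R : realFieldType) (alpha : R) (n : nat).
Hypothesis alpha_gt0 : 0 < alpha.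
Implicit Types (lam mu : {ffun vec n -> R}) (a b : vec n) (x : 'I_n -> R).

Definition coord_mass lam i d : R := \sum_b lam b * (b i == d)%:R.

Definition up_mass lam a : R := \sum_b lam b * (vle a b)%:R.

Lemma inP_ge0 x lam b : inP alpha x lam -> 0 <= lam b.
Proof. by case=> H _; case/andP: (H b). Qed.

Lemma coord_mass_ge0 x lam i d : inP alpha x lam -> 0 <= coord_mass lam i d.
Proof. by move=> H; apply: sumr_ge0 => b _; exact: mulr_ge0 (inP_ge0 b H) _. Qed.

Lemma inP_coord_mass x lam i :
  inP alpha x lam -> x i = coord_mass lam i D1 - alpha * coord_mass lam i Dm.
Proof.
case=> _ [_ <-]; rewrite /coord_mass mulr_sumr -sumrB; apply: eq_bigr => b _.
by rewrite dval_split; ring.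
Qed.

Lemma chain_coord_mass lam i :
  chain_support lam -> coord_mass lam i D1 = 0 \/ coord_mass lam i Dm = 0.
Proof.
move=> C; case: (eqVneq (coord_mass lam i D1) 0) => [|H1]; first by left.
case: (eqVneq (coord_mass lam i Dm) 0) => [|H2]; first by right.
have [b] := sum_neq0_witness H1; have [b'] := sum_neq0_witness H2.
case: (eqVneq (b' i) Dm) => [e'|]; last by rewrite mulr0 eqxx.
case: (eqVneq (b i) D1) => [e|]; last by rewrite mulr0 eqxx.
rewrite !mulr1 => nz' nz.
by case/orP: (C _ _ nz nz') => /forallP /(_ i); rewrite /dle e e'.
Qed.

Lemma signed_split_unique p q p' q' :
  0 <= p -> 0 <= q -> 0 <= p' -> 0 <= q' -> p = 0 \/ q = 0 -> p' = 0 \/ q' = 0 ->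
  p - alpha * q = p' - alpha * q' -> p = p' /\ q = q'.
Proof.
move=> p0 q0 p'0 q'0 pq p'q' E.
have aq : 0 <= alpha * q by rewrite mulr_ge0 // ltW.
have aq' : 0 <= alpha * q' by rewrite mulr_ge0 // ltW.
have cancel_alpha r r' : alpha * r = alpha * r' -> r = r'.
  by apply: mulfI; rewrite gt_eqF.
by case: pq => ?; case: p'q' => ?; subst; (split; [lra | apply: cancel_alpha; lra]).
Qed.

Lemma coord_mass_unique x lam mu i d :
  inP alpha x lam -> chain_support lam -> inP alpha x mu -> chain_support mu ->
  d != D0 -> coord_mass lam i d = coord_mass mu i d.
Proof.
move=> Hl Cl Hm Cm d0.
have [E1 E2] := signed_split_unique (coord_mass_ge0 i D1 Hl) (coord_mass_ge0 i Dm Hl)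
  (coord_mass_ge0 i D1 Hm) (coord_mass_ge0 i Dm Hm) (chain_coord_mass i Cl)
  (chain_coord_mass i Cm) (etrans (esym (inP_coord_mass i Hl)) (inP_coord_mass i Hm)).
by case: d d0 => [[]|].
Qed.

Lemma up_mass_le x lam a j :
  inP alpha x lam -> a j != D0 -> up_mass lam a <= coord_mass lam j (a j).
Proof.
move=> H aj; apply: ler_sum => b _; apply: ler_wpM2l; first exact: inP_ge0 H.
by case: (boolP (vle a b)) => // /vle_coord /(_ aj) ->; rewrite eqxx.
Qed.

(* Every support vector with j-th coordinate d lies above b, hence agrees with b
   at i; and b itself is counted at (i, b i) only. *)
Lemma chain_coord_mass_lt x lam b i j d :
  inP alpha x lam -> chain_support lam -> lam b != 0 ->
  b i != D0 -> d != D0 -> b j != d ->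
  coord_mass lam j d < coord_mass lam i (b i).
Proof.
move=> H C nzb bi0 d0 bjd.
rewrite -subr_gt0 /coord_mass -sumrB (bigD1 b) //= eqxx (negbTE bjd) mulr1 mulr0 subr0.
apply: ltr_pwDl; first by rewrite lt_def nzb (inP_ge0 b H).
apply: sumr_ge0 => b' _.
case: (eqVneq (lam b') 0) => [->|nzb']; first by rewrite !mul0r subrr.
case: (eqVneq (b' j) d) => [b'j|]; last by rewrite mulr0 subr0 mulr_ge0 ?(inP_ge0 b' H).
suff -> : b' i == b i by rewrite subrr.
case/orP: (C _ _ nzb nzb') => le_bb'; first by rewrite (vle_coord le_bb' bi0).
by move: bjd; rewrite (vle_coord le_bb' _) ?b'j ?eqxx.
Qed.

(* On a chain, the up-set mass of a is the least coordinate mass along the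
   support of a. *)
Lemma up_mass_attained x lam a i0 :
  inP alpha x lam -> chain_support lam -> a i0 != D0 ->
  exists2 i, a i != D0 & up_mass lam a = coord_mass lam i (a i).
Proof.
move=> H C ai0.
case: (arg_minP (fun j => coord_mass lam j (a j)) (P := [pred j | a j != D0]) ai0)
  => i ai imin.
exists i => //; apply/eqP; rewrite eq_le (up_mass_le H ai) /=.
apply: ler_sum => b _.
case: (eqVneq (lam b) 0) => [->|nzb]; first by rewrite !mul0r.
case: (eqVneq (b i) (a i)) => [bi|]; last by rewrite mulr0 mulr_ge0 ?(inP_ge0 b H).
case: (boolP (vle a b)) => //.
rewrite negb_forall => /existsP [j]; rewrite /dle negb_or => /andP [aj0 ajb].
have := chain_coord_mass_lt H C nzb (i := i) (j := j) (d := a j).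
rewrite bi [b j == _]eq_sym => /(_ ai aj0 ajb).
by rewrite ltNge imin.
Qed.

Lemma up_mass_unique x lam mu a :
  inP alpha x lam -> chain_support lam -> inP alpha x mu -> chain_support mu ->
  up_mass lam a = up_mass mu a.
Proof.
move=> Hl Cl Hm Cm.
case: (pickP [pred j | a j != D0]) => [i0 /= ai0|a0].
  have [i ai Ul] := up_mass_attained Hl Cl ai0.
  have [j aj Um] := up_mass_attained Hm Cm ai0.
  apply/eqP; rewrite eq_le; apply/andP; split.
  - by rewrite Um -(coord_mass_unique j Hl Cl Hm Cm aj) (up_mass_le Hl aj).
  - by rewrite Ul (coord_mass_unique i Hl Cl Hm Cm ai) (up_mass_le Hm ai).
have above_a b : vle a b.
  by apply/forallP => k; move: (a0 k) => /= /negbFE /eqP ->.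
rewrite /up_mass; under eq_bigr => b _ do rewrite above_a mulr1.
under [RHS]eq_bigr => b _ do rewrite above_a mulr1.
by case: Hl => _ [-> _]; case: Hm => _ [-> _].
Qed.

Lemma up_mass_split lam a :
  up_mass lam a = lam a + \sum_(b | b != a) lam b * (vle a b)%:R.
Proof. by rewrite /up_mass (bigD1 a) //= vle_refl mulr1. Qed.

(* Moebius inversion along the number of zero coordinates: chain-supported
   representations are unique. *)
Lemma chain_rep_unique x lam mu :
  inP alpha x lam -> chain_support lam -> inP alpha x mu -> chain_support mu ->
  lam = mu.
Proof.
move=> Hl Cl Hm Cm.
suff eq_below k a : (#|[pred i | a i == D0]| < k)%N -> lam a = mu a.
  by apply/ffunP => a; apply: (eq_below _.+1).
elim: k a => // k IH a zeros_a.
have := up_mass_unique a Hl Cl Hm Cm; rewrite !up_mass_split.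
suff -> : \sum_(b | b != a) lam b * (vle a b)%:R = \sum_(b | b != a) mu b * (vle a b)%:R.
  exact: addIr.
apply: eq_bigr => b ne_ba; case: (boolP (vle a b)) => ab; rewrite ?mulr0 // IH //.
exact: leq_trans (zeros_lt ab ne_ba) _.
Qed.

End Uniqueness.

Section ChainRepresentation.
Variables (R : realFieldType) (alpha : R) (n : nat) (x : 'I_n -> R).

Definition magnitude (i : 'I_n) : R := if 0 <= x i then x i else - x i / alpha.
Definition sign (i : 'I_n) : D := if 0 <= x i then D1 else Dm.

Definition by_magnitude : seq 'I_n := sort (fun i j => magnitude j <= magnitude i) (enum 'I_n).
Definition rank (i : 'I_n) : nat := index i by_magnitude.

Definition chain (k : nat) : vec n := [ffun i => if (rank i < k)%N then sign i else D0].

(* level 0 = 1, level k.+1 = magnitude of the coordinate of rank k,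
   level n.+1 = 0 *)
Definition level (k : nat) : R := nth 0 (1 :: map magnitude by_magnitude) k.
Definition weight (k : nat) : R := level k - level k.+1.

Definition chain_rep : {ffun vec n -> R} :=
  [ffun a => \sum_(k < n.+1) weight k * (a == chain k)%:R].

Lemma size_by_magnitude : size by_magnitude = n.
Proof. by rewrite size_sort size_enum_ord. Qed.

Lemma mem_by_magnitude i : i \in by_magnitude.
Proof. by rewrite mem_sort mem_enum. Qed.

Lemma rank_lt i : (rank i < n)%N.
Proof. by rewrite -size_by_magnitude index_mem mem_by_magnitude. Qed.

Lemma nth_rank i j0 : nth j0 by_magnitude (rank i) = i.
Proof. by rewrite nth_index // mem_by_magnitude. Qed.

Lemma rank_inj : injective rank.
Proof. by move=> i j eq_ij; rewrite -(nth_rank i i) eq_ij nth_rank. Qed.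

Lemma rank_nth k j0 : (k < n)%N -> rank (nth j0 by_magnitude k) = k.
Proof. by move=> hk; rewrite /rank index_uniq ?sort_uniq ?enum_uniq ?size_by_magnitude. Qed.

Lemma rank_surj k : (k < n)%N -> exists i, rank i = k.
Proof. by move=> hk; exists (nth (Ordinal hk) by_magnitude k); exact: rank_nth. Qed.

Lemma level_rank i : level (rank i).+1 = magnitude i.
Proof. by rewrite /level /= (nth_map i) ?nth_rank // size_by_magnitude rank_lt. Qed.

Lemma level_last : level n.+1 = 0.
Proof. by rewrite /level /= nth_default // size_map size_by_magnitude. Qed.

Lemma sign_magnitude i : 0 < alpha -> dval alpha (sign i) * magnitude i = x i.
Proof.
move=> ha; rewrite /sign /magnitude; case: ifP => _ /=; first by rewrite mul1r.
by field; rewrite gt_eqF.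
Qed.

Lemma magnitude_bounds i : 0 < alpha -> in_box alpha x -> 0 <= magnitude i <= 1.
Proof.
move=> ha /(_ i) /andP [lo hi]; rewrite /magnitude; case: ifP => [-> //|].
move/negbT; rewrite -ltNge => neg.
apply/andP; split; first by apply: divr_ge0; rewrite ?oppr_ge0 ltW.
by rewrite ler_pdivrMr // mul1r lerNl.
Qed.

(* The levels decrease from 1 to 0, so the weights are nonnegative. *)
Lemma weight_ge0 k : 0 < alpha -> in_box alpha x -> 0 <= weight k.
Proof.
move=> ha hx; rewrite /weight subr_ge0 /level.
set s := 1 :: map magnitude by_magnitude.
have ge_trans : transitive (fun u v : R => v <= u).
  by move=> u v w h1 h2; exact: le_trans h2 h1.
have s_sorted : sorted (fun u v : R => v <= u) s.
  rewrite /s /= path_sortedE // sorted_map sort_sorted ?andbT; last first.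
    by move=> i j; exact: le_total.
  by apply/allP => _ /mapP [i _ ->]; case/andP: (magnitude_bounds i ha hx).
have s_ge0 m : 0 <= nth 0 s m.
  case: (ltnP m (size s)) => hm; last by rewrite nth_default.
  move: (mem_nth 0 hm); rewrite inE => /orP [/eqP -> //|/mapP [i _ ->]].
  by case/andP: (magnitude_bounds i ha hx).
case: (ltnP k.+1 (size s)) => hk; last by rewrite (nth_default 0 hk) s_ge0.
by apply: (sorted_leq_nth ge_trans _ 0 s_sorted); rewrite ?inE // (ltn_trans _ hk).
Qed.

Lemma sum_weight_from m : (m <= n.+1)%N -> \sum_(m <= k < n.+1) weight k = level m.
Proof.
move=> hm; rewrite (telescope_sumr_eq (fun k => - level k)) => [|//|k _].
  by rewrite level_last oppr0 sub0r opprK.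
by rewrite /weight opprK addrC.
Qed.

Lemma sum_weight : \sum_(k < n.+1) weight k = 1.
Proof. by rewrite -(big_mkord xpredT) sum_weight_from. Qed.

Lemma sum_weight_on i :
  \sum_(k < n.+1) weight k * (rank i < k)%:R = magnitude i.
Proof.
have ri : (rank i <= n)%N by exact/ltnW/rank_lt.
rewrite -(big_mkord xpredT (fun k => weight k * (rank i < k)%:R)).
rewrite (big_cat_nat (n := (rank i).+1)) //= big_nat_cond big1 ?add0r; last first.
  by move=> k /andP [/andP [_ hk] _]; rewrite ltnNge -ltnS hk mulr0.
rewrite -level_rank -sum_weight_from //.
by apply: eq_big_nat => k /andP [hk _]; rewrite hk mulr1.
Qed.

Lemma sum_chain_rep (g : vec n -> R) :
  \sum_a chain_rep a * g a = \sum_(k < n.+1) weight k * g (chain k).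
Proof.
under eq_bigr => a _ do rewrite ffunE mulr_suml.
rewrite exchange_big /=; apply: eq_bigr => k _.
rewrite (bigD1 (chain k)) //= eqxx mulr1 big1 ?addr0 // => a /negbTE ->.
by rewrite mulr0 mul0r.
Qed.

Lemma chain_mono k k' : (k <= k')%N -> vle (chain k) (chain k').
Proof.
move=> hk; apply/forallP => i; rewrite !ffunE /dle.
by case: ifP => h; rewrite ?eqxx // (leq_trans h hk) eqxx orbT.
Qed.

Lemma chain_rep_support a : chain_rep a != 0 -> exists k, a = chain k.
Proof.
rewrite ffunE => /sum_neq0_witness [k].
by case: (eqVneq a (chain k)) => [->|]; [exists k | rewrite mulr0 eqxx].
Qed.

Lemma chain_rep_spec : 0 < alpha -> in_box alpha x ->
  inP alpha x chain_rep /\ chain_support chain_rep.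
Proof.
move=> ha hx; split; last first.
  move=> a b /chain_rep_support [k ->] /chain_rep_support [k' ->].
  case: (leqP k k') => h; first by rewrite chain_mono.
  by rewrite orbC chain_mono // ltnW.
split; [|split].
- move=> a; rewrite ffunE sumr_ge0 /= => [|k _]; last by rewrite mulr_ge0 ?weight_ge0.
  rewrite -[leRHS]sum_weight ler_sum // => k _.
  by case: (a == chain k); rewrite /= ?mulr1 ?mulr0 ?weight_ge0.
- under eq_bigr do rewrite -[chain_rep _]mulr1.
  by rewrite (sum_chain_rep (fun _ => 1)); under eq_bigr do rewrite mulr1; exact: sum_weight.
- move=> i; rewrite (sum_chain_rep (fun a => dval alpha (a i))).
  have on_i k : weight k * dval alpha (chain k i) =
                 weight k * (rank i < k)%:R * dval alpha (sign i).
    by rewrite ffunE; case: (rank i < k)%N; rewrite /= ?mulr1 ?mulr0 ?mul0r.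
  under eq_bigr do rewrite on_i.
  by rewrite -mulr_suml sum_weight_on mulrC sign_magnitude.
Qed.

Lemma chain_clear k i0 : rank i0 = k -> chain k = vclear (chain k.+1) i0.
Proof.
move=> <-; apply/ffunP => i; rewrite !ffunE; case: eqP => [->|ne]; first by rewrite ltnn.
by rewrite ltnS [(rank i <= _)%N]leq_eqVlt; case: eqP => // /rank_inj.
Qed.

Lemma chain0 : chain 0 = vzero n.
Proof. by apply/ffunP => i; rewrite !ffunE. Qed.

Lemma chain_stable k : (n <= k)%N -> chain k.+1 = chain k.
Proof.
move=> hk; apply/ffunP => i; rewrite !ffunE.
by rewrite (leq_trans (rank_lt i) hk) (leq_trans (rank_lt i) (leqW hk)).
Qed.

Lemma chain_full i : chain n i != D0.
Proof. by rewrite ffunE rank_lt /sign; case: ifP. Qed.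

End ChainRepresentation.

Section Greedy.
Variables (R : realFieldType) (alpha : R) (n : nat).
Hypothesis alpha_gt0 : 0 < alpha.
Implicit Types (y : 'I_n -> R) (a b : vec n).

Definition pairing y a : R := \sum_i y i * dval alpha (a i).

Lemma pairing_modular y a b :
  pairing y (vmeet a b) + alpha * pairing y (vjoin D0 a b)
  + (1 - alpha) * pairing y (vjoin D1 a b) = pairing y a + pairing y b.
Proof.
rewrite /pairing !mulr_sumr -!big_split; apply: eq_bigr => i _ /=.
by rewrite !ffunE -mulrDr -(dval_modular alpha (a i) (b i)); ring.
Qed.

Lemma pairing0 y : pairing y (vzero n) = 0.
Proof. by rewrite /pairing big1 // => i _; rewrite ffunE mulr0. Qed.

Lemma pairing_clear y a i0 :
  pairing y a = pairing y (vclear a i0) + y i0 * dval alpha (a i0).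
Proof.
rewrite /pairing (bigD1 i0) //= [X in _ = X + _](bigD1 i0) //= ffunE eqxx mulr0 add0r addrC.
by congr (_ + _); apply: eq_bigr => i ne_i; rewrite ffunE (negbTE ne_i).
Qed.

Variables (f : vec n -> R) (x : 'I_n -> R).
Local Notation chain := (chain alpha x).
Local Notation rank := (rank alpha x).

Definition greedy (i : 'I_n) : R :=
  (f (chain (rank i).+1) - f (chain (rank i))) / dval alpha (sign x i).

Lemma greedy_step k i0 :
  rank i0 = k -> greedy i0 * dval alpha (chain k.+1 i0) = f (chain k.+1) - f (chain k).
Proof.
move=> <-; rewrite ffunE ltnSn /greedy; apply: divfK.
by apply: dval_neq0 => //; rewrite /sign; case: ifP.
Qed.

Lemma chain_affine k : f (chain k) = f (vzero n) + pairing greedy (chain k).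
Proof.
elim: k => [|k IH]; first by rewrite chain0 pairing0 addr0.
case: (ltnP k n) => hk; last by rewrite chain_stable.
have [i0 ri0] := rank_surj alpha x hk.
rewrite (pairing_clear _ _ i0) -(chain_clear ri0) greedy_step //; lra.
Qed.

(* If f is bisubmodular, the affine function lies below f under the chain:
   a vertex below chain k.+1 is recovered from its restriction below chain k
   as the meet and joins against chain k. *)
Lemma below_chain k a : bisubmodular alpha f ->
  vle a (chain k) -> f (vzero n) + pairing greedy a <= f a.
Proof.
move=> Hf; elim: k a => [|k IH] a Ha.
  by rewrite chain0 in Ha; rewrite (vle0 Ha) pairing0 addr0.
case: (ltnP k n) => hk; last by apply: IH; rewrite -chain_stable.
have [i0 ri0] := rank_surj alpha x hk.
have clear := chain_clear ri0.
case: (eqVneq (a i0) D0) => [ai0|ai0].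
  by apply: IH; rewrite clear; exact: vle_clear0.
have [le_a' meet join] := vle_clear_step Ha ai0; rewrite -clear in le_a' meet join.
have := Hf a (chain k); rewrite meet !join.
have := IH _ le_a'.
rewrite (pairing_clear _ a i0) -(vle_coord Ha ai0) greedy_step //; lra.
Qed.

(* Let t
   be the top of the chain (full support) and e = a \/_1 t; bisubmodularity on
   (e, t) gives the bound at e, and then bisubmodularity on (a, t) at a. *)
Lemma greedy_minorant a : alpha <= 1 -> bisubmodular alpha f ->
  f (vzero n) + pairing greedy a <= f a.
Proof.
move=> ha1 Hf.
pose g b := f (vzero n) + pairing greedy b.
set t := chain n; set e := vjoin D1 a t.
have below_t b : vle b t -> g b <= f b by exact: below_chain.
have at_t : f t = g t by exact: chain_affine.
have [le_at le_a0t absorb] := vmeet_join_full a (chain_full alpha x).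
have [le_et le_e0t _] := vmeet_join_full e (chain_full alpha x).
rewrite -/t -/e in le_at le_a0t absorb le_et le_e0t.
have scale r c : 0 <= c -> g r <= f r -> c * g r <= c * f r.
  by move=> c0 le_gf; rewrite ler_wpM2l.
have at_e : g e <= f e.
  suff : 0 <= alpha * (f e - g e) by rewrite pmulr_rge0 // subr_ge0.
  have := Hf e t; have := pairing_modular greedy e t; rewrite absorb.
  have := below_t _ le_et; have := scale _ _ (ltW alpha_gt0) (below_t _ le_e0t).
  move: at_t; rewrite /g; lra.
have := Hf a t; have := pairing_modular greedy a t; rewrite -/e.
have := below_t _ le_at; have := scale _ _ (ltW alpha_gt0) (below_t _ le_a0t).
have := scale _ _ (_ : 0 <= 1 - alpha) at_e; rewrite subr_ge0 => /(_ ha1).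
move: at_t; rewrite /g; lra.
Qed.

End Greedy.

Section Convexity.
Variables (R : realFieldType) (alpha : R) (n : nat).

Lemma box_convex (x y : 'I_n -> R) t : in_box alpha x -> in_box alpha y -> 0 <= t <= 1 ->
  in_box alpha (fun i => t * x i + (1 - t) * y i).
Proof.
move=> hx hy /andP [t0 t1] i; case/andP: (hx i) => x0 x1; case/andP: (hy i) => y0 y1.
have t0' : 0 <= 1 - t by rewrite subr_ge0.
have := ler_wpM2l t0 x0; have := ler_wpM2l t0 x1.
have := ler_wpM2l t0' y0; have := ler_wpM2l t0' y1.
by move=> *; apply/andP; split; lra.
Qed.

Lemma convex_of_supporting_affine (g : ('I_n -> R) -> R) :
  (forall z, in_box alpha z -> exists c (y : 'I_n -> R),
     g z = c + \sum_i y i * z i /\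
     forall v, in_box alpha v -> c + \sum_i y i * v i <= g v) ->
  convex_on_box alpha g.
Proof.
move=> supp x w t hx hw /andP [t0 t1].
have [c [y [at_z below]]] := supp _ (box_convex hx hw (introT andP (conj t0 t1))).
have lin : \sum_i y i * (t * x i + (1 - t) * w i) =
           t * \sum_i y i * x i + (1 - t) * \sum_i y i * w i.
  by rewrite !mulr_sumr -big_split; apply: eq_bigr => i _ /=; ring.
have := ler_wpM2l t0 (below _ hx).
have := ler_wpM2l (_ : 0 <= 1 - t) (below _ hw); rewrite subr_ge0 => /(_ t1).
by rewrite at_z lin; lra.
Qed.

End Convexity.

Section LovaszExtension.
Variables (R : realFieldType) (alpha : R) (n : nat) (f : vec n -> R).
Hypothesis alpha_gt0 : 0 < alpha.

Lemma lovasz_rep x lam : inP alpha x lam -> chain_support lam ->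
  lovasz alpha f x = \sum_a lam a * f a.
Proof.
move=> H C; have [H' C'] : inP alpha x (lambda_x alpha x) /\ chain_support (lambda_x alpha x).
  exact: (epsilon_spec _ (fun l => inP alpha x l /\ chain_support l)
                      (ex_intro _ lam (conj H C))).
by rewrite /lovasz (chain_rep_unique alpha_gt0 H' C' H C).
Qed.

Lemma mean_pairing x lam (y : 'I_n -> R) c : inP alpha x lam ->
  \sum_a lam a * (c + pairing alpha y a) = c + \sum_i y i * x i.
Proof.
case=> _ [sum1 mean]; under eq_bigr do rewrite mulrDr.
rewrite big_split /= -mulr_suml sum1 mul1r; congr (_ + _).
under eq_bigr do rewrite /pairing mulr_sumr.
rewrite exchange_big /=; apply: eq_bigr => i _.
by rewrite -mean mulr_sumr; apply: eq_bigr => a _; ring.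
Qed.

Lemma lovasz_touch z : in_box alpha z ->
  lovasz alpha f z = f (vzero n) + \sum_i greedy alpha f z i * z i.
Proof.
move=> hz; have [Iz Cz] := chain_rep_spec alpha_gt0 hz.
rewrite (lovasz_rep Iz Cz) -(mean_pairing _ _ Iz); apply: eq_bigr => a _.
have [/eqP->|/chain_rep_support [k ->]] := boolP (chain_rep alpha z a == 0).
  by rewrite !mul0r.
by rewrite (chain_affine alpha_gt0 f z k).
Qed.

Lemma lovasz_minorant z v : alpha <= 1 -> bisubmodular alpha f -> in_box alpha v ->
  f (vzero n) + \sum_i greedy alpha f z i * v i <= lovasz alpha f v.
Proof.
move=> ha1 Hf hv; have [Iv Cv] := chain_rep_spec alpha_gt0 hv.
rewrite (lovasz_rep Iv Cv) -(mean_pairing _ _ Iv); apply: ler_sum => a _.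
by rewrite ler_wpM2l ?(inP_ge0 a Iv) ?greedy_minorant.
Qed.

Lemma bool_weights_bounds (p q r : R) (u v w : bool) :
  0 <= p -> 0 <= q -> 0 <= r -> p + q + r = 1 ->
  0 <= p * u%:R + q * v%:R + r * w%:R <= 1.
Proof.
by move=> *; case: u; case: v; case: w; rewrite /= ?mulr1 ?mulr0; apply/andP; split; lra.
Qed.

Definition pointmass (c : vec n) : {ffun vec n -> R} := [ffun b => (b == c)%:R].

Lemma sum_pointmass c (g : vec n -> R) : \sum_b pointmass c b * g b = g c.
Proof.
rewrite (bigD1 c) //= ffunE eqxx mul1r big1 ?addr0 // => b /negbTE ne_bc.
by rewrite ffunE ne_bc mul0r.
Qed.

Lemma vertex_in_box (a : vec n) : alpha <= 1 -> in_box alpha (fun i => dval alpha (a i)).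
Proof. by move=> ha1 i; exact: dval_bounds. Qed.

Lemma lovasz_vertex (a : vec n) : lovasz alpha f (fun i => dval alpha (a i)) = f a.
Proof.
have rep : inP alpha (fun i => dval alpha (a i)) (pointmass a).
  split; [|split].
  - by move=> b; rewrite ffunE; case: (b == a); rewrite /= ?ler01 ?lexx.
  - by under eq_bigr do rewrite -[pointmass a _]mulr1; rewrite (sum_pointmass a (fun _ => 1)).
  - by move=> i; rewrite (sum_pointmass a (fun b => dval alpha (b i))).
have chain : chain_support (pointmass a).
  move=> b b'; rewrite !ffunE.
  case: (eqVneq b a) => [->|]; last by rewrite eqxx.
  by case: (eqVneq b' a) => [->|]; rewrite ?vle_refl // eqxx.
by rewrite (lovasz_rep rep chain) sum_pointmass.
Qed.

Lemma lovasz_midpoint (a b : vec n) : alpha <= 1 ->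
  lovasz alpha f (fun i => 2^-1 * dval alpha (a i) + (1 - 2^-1) * dval alpha (b i)) =
  2^-1 * f (vmeet a b) + alpha / 2 * f (vjoin D0 a b) + (1 - alpha) / 2 * f (vjoin D1 a b).
Proof.
move=> ha1; have ha := alpha_gt0.
set m := vmeet a b; set j0 := vjoin D0 a b; set j1 := vjoin D1 a b.
pose lam : {ffun vec n -> R} := [ffun c => 2^-1 * pointmass m c + alpha / 2 * pointmass j0 c
                       + (1 - alpha) / 2 * pointmass j1 c].
have lamE c : lam c = 2^-1 * (c == m)%:R + alpha / 2 * (c == j0)%:R
                      + (1 - alpha) / 2 * (c == j1)%:R by rewrite !ffunE.
have sum_lam (g : vec n -> R) : \sum_c lam c * g c =
    2^-1 * g m + alpha / 2 * g j0 + (1 - alpha) / 2 * g j1.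
  have expand c : lam c * g c = 2^-1 * (pointmass m c * g c)
      + alpha / 2 * (pointmass j0 c * g c) + (1 - alpha) / 2 * (pointmass j1 c * g c).
    by rewrite ffunE; ring.
  under eq_bigr do rewrite expand.
  by rewrite !big_split /= -!mulr_sumr !sum_pointmass.
have rep : inP alpha (fun i => 2^-1 * dval alpha (a i) + (1 - 2^-1) * dval alpha (b i)) lam.
  split; [|split].
  - by move=> c; rewrite lamE; apply: bool_weights_bounds; lra.
  - by under eq_bigr do rewrite -[lam _]mulr1; rewrite (sum_lam (fun _ => 1)); lra.
  - move=> i; rewrite (sum_lam (fun c => dval alpha (c i))) /m /j0 /j1 !ffunE.
    by have := dval_modular alpha (a i) (b i); lra.
have chain : chain_support lam.
  have [le_m0 le_m1 le_01] := vmeet_join_chain a b.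
  have supp c : lam c != 0 -> [|| c == m, c == j0 | c == j1].
    apply: contraR; rewrite !negb_or => /and3P [/negbTE m' /negbTE j0' /negbTE j1'].
    by rewrite lamE m' j0' j1' !mulr0 !addr0.
  move=> c c' /supp /or3P [] /eqP -> /supp /or3P [] /eqP ->;
    by rewrite ?vle_refl ?le_m0 ?le_m1 ?le_01 ?orbT.
by rewrite (lovasz_rep rep chain) sum_lam.
Qed.

(* Convexity at the midpoint of two vertices is the bisubmodular inequality. *)
Lemma bisubmodular_of_convex : alpha <= 1 ->
  convex_on_box alpha (lovasz alpha f) -> bisubmodular alpha f.
Proof.
move=> ha1 conv a b.
have half : 0 <= (2^-1 : R) <= 1 by apply/andP; split; lra.
have := conv _ _ _ (vertex_in_box a ha1) (vertex_in_box b ha1) half.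
by rewrite /= lovasz_midpoint // !lovasz_vertex; lra.
Qed.

(* The greedy affine functions support f^L from below at every point. *)
Lemma convex_of_bisubmodular : alpha <= 1 ->
  bisubmodular alpha f -> convex_on_box alpha (lovasz alpha f).
Proof.
move=> ha1 Hf; apply: convex_of_supporting_affine => z hz.
exists (f (vzero n)), (greedy alpha f z); split; first exact: lovasz_touch.
by move=> v hv; exact: lovasz_minorant.
Qed.

End LovaszExtension.

Theorem lemma2 (R : realFieldType) (alpha : R) (n : nat) (f : vec n -> R) :
  0 < alpha -> alpha <= 1 ->
  (convex_on_box alpha (lovasz alpha f) <-> bisubmodular alpha f).
Proof.
move=> alpha_gt0 alpha_le1; split.
- exact: bisubmodular_of_convex.
- exact: convex_of_bisubmodular.
Qed.
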